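(* Let $m,n\ge1$ be integers, $A=(a_{ij})$ an $n\times m$ real matrix, $0<\delta<1$ real and $s>1$ an integer. Suppose there is an $m$-tuple of integers $s_1,\dots,s_m$ with $$s=\max_j|s_j|>2^{\frac{(m+n-1)n}{4m}}\left(\frac{n\delta^2}{m}\right)^{\frac{n}{2(m+n)}}\quad\text{and}\quad \max_i\|s_1a_{i1}+\dots+s_ma_{im}\|\le\delta s^{-\frac{m}{n}}.$$ Then applying the ILLL-algorithm to $A$ with $$q_{\max}\ge 2^{\frac{m^2+m(n-1)+4n}{4m}}\left(\frac{m}{n\delta^2}\right)^{\frac{n}{2(m+n)}}s$$ yields an $m$-tuple $q_1,\dots,q_m$ with $$\max_j|q_j|\le 2^{\frac{m^2+m(n-1)+4n}{4m}}\left(\frac{m}{n\delta^2}\right)^{\frac{n}{2(m+n)}}s\quad\text{and}\quad \max_i\|q_1a_{i1}+\dots+q_ma_{im}\|\le 2^{\frac{m+n}{2}}\sqrt n\,\delta s^{-\frac{m}{n}}.$$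
   Context: $\|x\|$ denotes the distance from $x\in\mathbb R$ to the nearest integer. A basis $b_1,\dots,b_r$ of $\mathbb R^r$ with Gram–Schmidt vectors $b_i^*=b_i-\sum_{j<i}\mu_{ij}b_j^*$, $\mu_{ij}=(b_i,b_j^* )/(b_j^*,b_j^* )$, is reduced if $|\mu_{ij}|\le\frac12$ ($j<i$) and $|b_i^*+\mu_{i,i-1}b_{i-1}^*|^2\ge\frac34|b_{i-1}^*|^2$ ($1<i\le r$); the LLL-algorithm returns a reduced basis of the lattice generated by its input basis. The ILLL-algorithm on input $A$ and $q_{\max}>1$: put $k'=\left\lceil -\frac{(m+n-1)(m+n)}{4n}+\frac{m\log_2 q_{\max}}{n}\right\rceil$ and, for $k\ge1$, $c(k)=\left(2^{-\frac{m+n+3}{4}-k+1}\right)^{\frac{m+n}{m}}$. Start with the basis given by the columns of $B=\begin{pmatrix} I_n & A\\ 0& c(1)I_m\end{pmatrix}$. In iteration $k=1,\dots,k'$: apply the LLL-algorithm to the current basis; from the first vector of the reduced basis, which has the form $(q_1a_{11}+\dots+q_ma_{1m}-p_1,\dots,q_1a_{n1}+\dots+q_ma_{nm}-p_n,c(k)q_1,\dots,c(k)q_m)^T$ with $p_i,q_j\in\mathbb Z$, output the $m$-tuple $q(k)=(q_1,\dots,q_m)$; then divide the last $m$ coordinates of all basis vectors by $2^{\frac{m+n}{m}}$. The $m$-tuples returned by the algorithm are $q(1),\dots,q(k')$. *)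

From HB Require Import structures.
From mathcomp Require Import all_boot all_order all_algebra.
From mathcomp Require Import all_classical all_reals all_analysis.
Set Implicit Arguments. Unset Strict Implicit. Unset Printing Implicit Defensive.
Import Order.TTheory GRing.Theory Num.Theory.
Local Open Scope ring_scope.

Section ILLL.
Variable R : realType.

Definition dnint (x : R) : R :=
  Num.min (x - (Num.floor x)%:~R) ((Num.ceil x)%:~R - x).

Definition dotv (d : nat) (u v : 'cV[R]_d) : R := \sum_(i < d) u i 0 * v i 0.

(* the k-th basis vector (k-th column) of B, nat-indexed (0 if k >= d) *)
Definition bvec (d : nat) (B : 'M[R]_d) (k : nat) : 'cV[R]_d :=
  if insub k is Some j then col j B else 0.

(* gsl B k = [:: b_0^*; ...; b_(k-1)^*], Gram--Schmidt vectors *)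
Fixpoint gsl (d : nat) (B : 'M[R]_d) (k : nat) : seq 'cV[R]_d :=
  match k with
  | 0 => [::]
  | k'.+1 =>
    let s := gsl B k' in
    rcons s (bvec B k' -
             \sum_(j < k') (dotv (bvec B k') (nth 0 s j) /
                            dotv (nth 0 s j) (nth 0 s j)) *: nth 0 s j)
  end.

Definition gs (d : nat) (B : 'M[R]_d) (i : nat) : 'cV[R]_d := nth 0 (gsl B i.+1) i.

Definition gsmu (d : nat) (B : 'M[R]_d) (i j : nat) : R :=
  dotv (bvec B i) (gs B j) / dotv (gs B j) (gs B j).

Definition reduced (d : nat) (B : 'M[R]_d) : Prop :=
  (forall i j : nat, (j < i < d)%N -> `|gsmu B i j| <= 1/2) /\
  (forall i : nat, (0 < i < d)%N ->
     dotv (gs B i + gsmu B i i.-1 *: gs B i.-1) (gs B i + gsmu B i i.-1 *: gs B i.-1)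
     >= 3/4 * dotv (gs B i.-1) (gs B i.-1)).

Definition same_lattice (d : nat) (B B' : 'M[R]_d) : Prop :=
  exists U V : 'M[int]_d,
    B' = B *m map_mx (fun z : int => z%:~R) U /\
    B = B' *m map_mx (fun z : int => z%:~R) V.

Definition ILLL_kmax (m n : nat) (qmax : R) : int :=
  Num.ceil (- ((m + n - 1)%:R * (m + n)%:R / (4 * n%:R))
            + m%:R * (ln qmax / ln 2) / n%:R).

Definition ILLL_c (m n : nat) (k : nat) : R :=
  (2 `^ (- ((m + n + 3)%:R / 4) - k%:R + 1)) `^ ((m + n)%:R / m%:R).

Definition ILLL_B0 (m n : nat) (A : 'M[R]_(n, m)) : 'M[R]_(n + m) :=
  block_mx 1%:M A 0 (ILLL_c m n 1)%:M.

Definition ILLL_scale (m n : nat) (B : 'M[R]_(n + m)) : 'M[R]_(n + m) :=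
  col_mx (usubmx B) ((2 `^ ((m + n)%:R / m%:R))^-1 *: dsubmx B).

(* A run of the ILLL-algorithm on input A, qmax:
   Cur k = basis at the start of iteration k, Red k = the reduced basis
   returned by LLL in iteration k (any reduced basis of the same lattice),
   q k = the output m-tuple, read off the first vector of Red k. *)
Definition ILLL_run (m n : nat) (A : 'M[R]_(n, m)) (qmax : R)
    (Cur Red : nat -> 'M[R]_(n + m)) (q : nat -> 'cV[int]_m) : Prop :=
  Cur 1%N = ILLL_B0 A /\
  forall k : nat, (1 <= k)%N -> (k%:Z <= ILLL_kmax m n qmax)%R ->
    [/\ same_lattice (Cur k) (Red k), reduced (Red k),
        (exists p : 'cV[int]_n,
           bvec (Red k) 0 =
           col_mx (A *m map_mx (fun z : int => z%:~R) (q k)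
                   - map_mx (fun z : int => z%:~R) p)
                  (ILLL_c m n k *: map_mx (fun z : int => z%:~R) (q k)))
      & Cur k.+1 = ILLL_scale (Red k)].

End ILLL.

From HB Require Import structures.
From mathcomp Require Import all_boot all_order all_algebra.
From mathcomp Require Import all_classical all_reals all_analysis.
From mathcomp Require Import lra ring zify.
Import Order.TTheory GRing.Theory Num.Theory.
Local Open Scope ring_scope.
Set Implicit Arguments. Unset Strict Implicit. Unset Printing Implicit Defensive.

(* In iteration k the current basis spans a lattice containing that of
   B_k = [[I, A], [0, c(k) I]] and has determinant at most c(k)^m, so the
   first vector b of the reduced basis satisfies |b| <= 2^-k: the LLL bound
   |b|^(2(n+m)) <= 2^((n+m)(n+m-1)/2) det^2 is exactly calibrated by c(k).
   Writing b = (qA - p, c(k) q) gives |q_j| <= 2^-k / c(k).  On the other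
   hand b is at most 2^((n+m-1)/2) times longer than any nonzero lattice
   vector, in particular than the vector (s A - p, c(k) s) built from the
   given good approximation s, whose length is at most sqrt(2n) delta s^(-m/n)
   as soon as c(k) sqrt m s <= sqrt n delta s^(-m/n).  The iteration k is
   chosen as the least integer for which this holds; it is then small enough
   for 2^-k / c(k) to obey the claimed bound on the q_j. *)

Local Notation intr_mx := (map_mx (fun z : int => z%:~R)).

Section Dot.
Variables (R : realType) (d : nat).
Implicit Types u v w : 'cV[R]_d.

Lemma dotvC u v : dotv u v = dotv v u.
Proof. by apply: eq_bigr => i _; rewrite mulrC. Qed.

Lemma dotvDl u v w : dotv (u + v) w = dotv u w + dotv v w.
Proof. by rewrite /dotv -big_split; apply: eq_bigr => i _; rewrite !mxE mulrDl. Qed.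

Lemma dotvZl a u w : dotv (a *: u) w = a * dotv u w.
Proof. by rewrite /dotv mulr_sumr; apply: eq_bigr => i _; rewrite !mxE mulrA. Qed.

Lemma dotvBl u v w : dotv (u - v) w = dotv u w - dotv v w.
Proof. by rewrite dotvDl -scaleN1r dotvZl mulN1r. Qed.

Lemma dotv0l w : dotv 0 w = 0.
Proof. by rewrite /dotv big1 // => i _; rewrite mxE mul0r. Qed.

Lemma dotv_suml (I : Type) (r : seq I) (P : pred I) (F : I -> 'cV[R]_d) w :
  dotv (\sum_(i <- r | P i) F i) w = \sum_(i <- r | P i) dotv (F i) w.
Proof.
apply: (big_morph (fun u => dotv u w)); last exact: dotv0l.
by move=> x y; rewrite dotvDl.
Qed.

Lemma dotvDr u v w : dotv w (u + v) = dotv w u + dotv w v.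
Proof. by rewrite dotvC dotvDl !(dotvC w). Qed.

Lemma dotvZr a u w : dotv w (a *: u) = a * dotv w u.
Proof. by rewrite dotvC dotvZl dotvC. Qed.

Lemma dotvBr u v w : dotv w (u - v) = dotv w u - dotv w v.
Proof. by rewrite dotvC dotvBl !(dotvC w). Qed.

Lemma dotv_ge0 u : 0 <= dotv u u.
Proof. by apply: sumr_ge0 => i _; rewrite -expr2 sqr_ge0. Qed.

Lemma dotv_eq0 u : dotv u u = 0 -> u = 0.
Proof.
move=> /eqP; rewrite psumr_eq0; last by move=> i _; rewrite -expr2 sqr_ge0.
move=> /allP u0; apply/matrixP => i j; rewrite (ord1 j) mxE.
by have := u0 i (mem_index_enum _); rewrite /= -expr2 sqrf_eq0 => /eqP.
Qed.

Lemma sqr_coef_le_dotv u i : u i 0 ^+ 2 <= dotv u u.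
Proof.
rewrite /dotv (bigD1 i) //= -expr2 lerDl sumr_ge0 // => j _.
by rewrite -expr2 sqr_ge0.
Qed.

Lemma dotv_le_dim u K : (forall i, u i 0 ^+ 2 <= K) -> dotv u u <= d%:R * K.
Proof.
move=> uK; rewrite /dotv mulr_natl -[X in K *+ X](card_ord d) -sumr_const.
by apply: ler_sum => i _; rewrite -expr2.
Qed.

Lemma sqr_proj_le v g a : dotv v g = a * dotv g g -> a ^+ 2 * dotv g g <= dotv v v.
Proof.
move=> vg; have := dotv_ge0 (v - a *: g).
rewrite !(dotvBl, dotvBr, dotvZl, dotvZr) (dotvC g v) vg; lra.
Qed.

End Dot.

Lemma dotv_col_mx (R : realType) (a b : nat) (u : 'cV[R]_a) (w : 'cV[R]_b) :
  dotv (col_mx u w) (col_mx u w) = dotv u u + dotv w w.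
Proof.
rewrite /dotv big_split_ord; congr (_ + _); apply: eq_bigr => i _.
  by rewrite col_mxEu.
by rewrite col_mxEd.
Qed.

Section GramSchmidt.
Variables (R : realType) (d : nat) (B : 'M[R]_d).

Lemma size_gsl k : size (gsl B k) = k.
Proof. by elim: k => //= k IH; rewrite size_rcons IH. Qed.

Lemma nth_gsl k j : (j < k)%N -> nth 0 (gsl B k) j = gs B j.
Proof.
elim: k => // k IH; rewrite ltnS leq_eqVlt => /orP [/eqP -> //|jk].
by rewrite /= nth_rcons size_gsl jk IH.
Qed.

Lemma gsE i : gs B i = bvec B i -
  \sum_(j < i) (dotv (bvec B i) (gs B j) / dotv (gs B j) (gs B j)) *: gs B j.
Proof.
rewrite /gs /= nth_rcons size_gsl ltnn eqxx; congr (_ - _).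
by apply: eq_bigr => j _; rewrite nth_gsl.
Qed.

Lemma bvec_gsE i : bvec B i = gs B i + \sum_(j < i) gsmu B i j *: gs B j.
Proof. by rewrite gsE subrK. Qed.

Lemma gs0 : gs B 0 = bvec B 0.
Proof. by rewrite gsE big_ord0 subr0. Qed.

Lemma dotv_gs_lt i j : (j < i)%N -> dotv (gs B i) (gs B j) = 0.
Proof.
elim/ltn_ind: i j => i IH j ji.
have orth l : (l < i)%N -> l != j -> dotv (gs B l) (gs B j) = 0.
  move=> li lj; case: (ltngtP l j) => [lj'|jl|/eqP]; last by rewrite (negbTE lj).
    by rewrite dotvC IH.
  exact: IH.
rewrite {1}gsE dotvBl dotv_suml (bigD1 (Ordinal ji)) //= big1; last first.
  by move=> l /= lj; rewrite dotvZl orth // mulr0.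
rewrite addr0 dotvZl.
have [/dotv_eq0 ->|nz] := eqVneq (dotv (gs B j) (gs B j)) 0.
  by rewrite dotvC !(dotv0l, mul0r, mulr0, subr0).
by rewrite -mulrA mulVf // mulr1 subrr.
Qed.

Lemma dotv_gs i j : i != j -> dotv (gs B i) (gs B j) = 0.
Proof.
case: (ltngtP i j) => [ij|ji|] // _; last exact: dotv_gs_lt.
by rewrite dotvC dotv_gs_lt.
Qed.

Lemma dotv_bvec_gs_lt i r : (i < r)%N -> dotv (bvec B i) (gs B r) = 0.
Proof.
move=> ir; rewrite bvec_gsE dotvDl dotv_suml dotv_gs ?add0r; last first.
  by rewrite neq_ltn ir.
rewrite big1 // => j _; rewrite dotvZl dotv_gs ?mulr0 //.
by rewrite neq_ltn (ltn_trans (ltn_ord j) ir).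
Qed.

Lemma dotv_bvec_gs r : dotv (bvec B r) (gs B r) = dotv (gs B r) (gs B r).
Proof.
rewrite bvec_gsE dotvDl dotv_suml big1 ?addr0 // => j _.
by rewrite dotvZl dotv_gs ?mulr0 // neq_ltn ltn_ord.
Qed.

Hypothesis redB : reduced B.

(* size reduction |mu| <= 1/2 turns the Lovasz condition into the
   classical |b_i^*|^2 >= |b_(i-1)^*|^2 / 2 *)
Lemma reduced_gs_half i : (0 < i < d)%N ->
  dotv (gs B i.-1) (gs B i.-1) / 2 <= dotv (gs B i) (gs B i).
Proof.
case: redB => size_red lovasz hi; have := lovasz i hi.
have : `|gsmu B i i.-1| <= 1/2.
  apply: size_red; case/andP: hi => h0 ->; rewrite andbT.
  by case: i h0 => //= i _.
rewrite ler_norml !(dotvDl, dotvDr, dotvZl, dotvZr).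
have o : dotv (gs B i) (gs B i.-1) = 0.
  by apply: dotv_gs_lt; case/andP: hi => h0 _; rewrite prednK.
rewrite o (dotvC (gs B i.-1)) o !mulr0 !addr0.
have := dotv_ge0 (gs B i.-1).
move: (gsmu B i i.-1) (dotv (gs B i.-1) _) => mu g g0 /andP [mu_lb mu_ub].
have : 0 <= (1/4 - mu * mu) * g by apply: mulr_ge0 => //; nra.
lra.
Qed.

Lemma reduced_bvec0_le i : (i < d)%N ->
  dotv (bvec B 0) (bvec B 0) <= 2 ^+ i * dotv (gs B i) (gs B i).
Proof.
elim: i => [|i IH] hi; first by rewrite gs0 expr0 mul1r.
have := @reduced_gs_half i.+1; rewrite /= hi => /(_ isT) half.
apply: (le_trans (IH (ltnW hi))); rewrite exprS (mulrC 2) -mulrA.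
by apply: ler_wpM2l; rewrite ?exprn_ge0 //; lra.
Qed.

End GramSchmidt.

Section ReducedBasis.
Variables (R : realType) (d : nat) (B : 'M[R]_d).

Lemma dotv_mulmx (z : 'cV[R]_d) g :
  dotv (B *m z) g = \sum_(i < d) z i 0 * dotv (bvec B i) g.
Proof.
rewrite /dotv; under eq_bigr do rewrite mxE big_distrl.
rewrite exchange_big; apply: eq_bigr => i _ /=; rewrite /bvec valK mulr_sumr.
by apply: eq_bigr => k _ /=; rewrite !mxE mulrA (mulrC (z i 0)).
Qed.

Lemma sqr_intr_ge1 (x : int) : x != 0 -> 1 <= (x%:~R : R) ^+ 2.
Proof.
move=> x0; have : (1 <= `|x|)%R by lia.
rewrite -(ler_int R) intr_norm -(real_normK (num_real (x%:~R : R))) => x1.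
by rewrite expr2 mulr_ege1.
Qed.

(* the last Gram-Schmidt direction r used by an integer combination
   contributes at least |b_r^*| to it *)
Lemma reduced_bvec0_le_lattice (z : 'cV[int]_d) : reduced B ->
  B *m intr_mx z != 0 ->
  dotv (bvec B 0) (bvec B 0) <= 2 ^+ d.-1 * dotv (B *m intr_mx z) (B *m intr_mx z).
Proof.
move=> redB nz.
have [i0 zi0] : exists i0 : 'I_d, z i0 0 != 0.
  case: (pickP (fun i : 'I_d => z i 0 != 0)) => [i hi|z0]; first by exists i.
  move: nz; suff -> : intr_mx z = 0 :> 'cV[R]_d by rewrite mulmx0 eqxx.
  by apply/matrixP => i j; rewrite (ord1 j) !mxE; move/negbFE/eqP: (z0 i) => ->.
set v := B *m _.
have [r zr rmax] := @arg_maxnP _ i0 (fun i : 'I_d => z i 0 != 0) val zi0.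
have vr : dotv v (gs B r) = (z r 0)%:~R * dotv (gs B r) (gs B r).
  rewrite /v dotv_mulmx (bigD1 r) //= big1 ?addr0; first by rewrite mxE dotv_bvec_gs.
  move=> j jr; case: (ltngtP j r) => [jr'|rj|/val_inj e]; last by rewrite e eqxx in jr.
    by rewrite dotv_bvec_gs_lt // mulr0.
  have /eqP zj : z j 0 == 0.
    by apply/negPn/negP => /rmax /= /(leq_trans rj); rewrite ltnn.
  by rewrite mxE zj mul0r.
have gs_le_v : dotv (gs B r) (gs B r) <= dotv v v.
  apply: le_trans (sqr_proj_le vr); rewrite -[X in X <= _]mul1r.
  by apply: ler_wpM2r; [exact: dotv_ge0 | exact: sqr_intr_ge1].
apply: (le_trans (reduced_bvec0_le redB (ltn_ord r))).
apply: ler_pM; rewrite ?exprn_ge0 ?dotv_ge0 //.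
by rewrite ler_eXn2l ?ltr1n //; have := ltn_ord r; lia.
Qed.

Definition gs_mx : 'M[R]_d := \matrix_(k, i) gs B i k 0.
Definition gsmu_mx : 'M[R]_d :=
  \matrix_(j, i) (if (j < i)%N then gsmu B i j else (j == i)%:R).

Lemma gs_mx_decomp : B = gs_mx *m gsmu_mx.
Proof.
apply/matrixP => k i; rewrite !mxE.
have -> : B k i = bvec B i k 0 by rewrite /bvec valK mxE.
rewrite bvec_gsE mxE summxE.
rewrite (big_ord_widen d (fun j => (gsmu B i j *: gs B j) k 0) (ltnW (ltn_ord i))).
have -> : \sum_(j < d) gs_mx k j * gsmu_mx j i =
  \sum_(j < d) ((if j == i then gs B i k 0 else 0) +
               (if (j < i)%N then (gsmu B i j *: gs B j) k 0 else 0)).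
  apply: eq_bigr => j _; rewrite !mxE.
  case: (ltngtP j i) => [ji|ij|/val_inj ->].
  - have /negbTE -> : j != i by rewrite neq_ltn ji.
    by rewrite add0r mulrC.
  - have /negbTE -> : j != i by rewrite neq_ltn ij orbT.
    by rewrite mulr0 addr0.
  - by rewrite eqxx mulr1 addr0.
rewrite big_split /= [X in _ = X + _](bigD1 i) //= eqxx.
rewrite [X in _ = _ + X + _]big1 ?addr0; last by move=> j /= /negbTE ->.
by rewrite big_mkcond.
Qed.

Lemma det_gsmu_mx : \det gsmu_mx = 1.
Proof.
rewrite -det_tr det_trig; last first.
  apply/is_trig_mxP => i j ij; rewrite !mxE ltnNge (ltnW ij) /=.
  by have /negbTE -> : j != i by rewrite neq_ltn ij orbT.
by rewrite big1 // => i _; rewrite !mxE ltnn eqxx.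
Qed.

Lemma sqr_det_gs : \det B ^+ 2 = \prod_(i < d) dotv (gs B i) (gs B i).
Proof.
have -> : \det B = \det gs_mx by rewrite {1}gs_mx_decomp det_mulmx det_gsmu_mx mulr1.
rewrite expr2 -{1}det_tr -det_mulmx det_trig.
  by apply: eq_bigr => i _; rewrite !mxE; apply: eq_bigr => k _; rewrite !mxE.
apply/is_trig_mxP => i j ij; rewrite !mxE.
rewrite -[RHS](@dotv_gs _ _ B i j); last by rewrite neq_ltn ij.
by apply: eq_bigr => k _; rewrite !mxE.
Qed.

Lemma reduced_bvec0_le_det : reduced B ->
  dotv (bvec B 0) (bvec B 0) ^+ d <= 2 ^+ (\sum_(i < d) i) * \det B ^+ 2.
Proof.
move=> redB; rewrite sqr_det_gs -prodrXr -big_split /=.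
rewrite -[X in _ ^+ X <= _](card_ord d) -prodr_const.
apply: ler_prod => i _; rewrite dotv_ge0 /=.
exact: reduced_bvec0_le.
Qed.

End ReducedBasis.

Section NearestInteger.
Variable R : realType.

Lemma le_norm_of_sqr (x y : R) : 0 <= y -> x ^+ 2 <= y ^+ 2 -> `|x| <= y.
Proof. by move=> y0; rewrite -(real_normK (num_real x)) ler_pXn2r ?nnegrE. Qed.

Lemma dnint_le_dist (x : R) (z : int) : dnint x <= `|x - z%:~R|.
Proof.
rewrite /dnint ge_min; case: (lerP (z%:~R) x) => zx.
  have : (z%:~R : R) <= (Num.floor x)%:~R by rewrite ler_int floor_ge_int.
  by move=> ?; apply/orP; left; lra.
have : ((Num.ceil x)%:~R : R) <= z%:~R by rewrite ler_int ceil_le_int ltW.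
by move=> ?; apply/orP; right; lra.
Qed.

Definition nint (x : R) : int :=
  if x - (Num.floor x)%:~R <= (Num.ceil x)%:~R - x then Num.floor x else Num.ceil x.

Lemma dist_nint (x : R) : `|x - (nint x)%:~R| = dnint x.
Proof.
rewrite /dnint /nint; have fx := floor_le x; have cx := ceil_ge x.
case: lerP => h; first by rewrite ger0_norm // subr_ge0.
by rewrite ler0_norm ?subr_le0 //; lra.
Qed.

Lemma bigmax_dnint_le_sqnorm (a b c : nat) (A : 'M[R]_(a, b))
    (q : 'cV[int]_b) (p : 'cV[int]_a) (w : 'cV[R]_c) E :
  0 <= E ->
  dotv (col_mx (A *m intr_mx q - intr_mx p) w) (col_mx (A *m intr_mx q - intr_mx p) w)
    <= E ^+ 2 ->
  \big[Num.max/0]_(i < a) dnint (\sum_(j < b) (q j 0)%:~R * A i j) <= E.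
Proof.
move=> E0 hb; apply: bigmax_le => // i _; apply: le_trans (dnint_le_dist _ (p i 0)) _.
apply: le_norm_of_sqr => //; apply: le_trans hb.
rewrite dotv_col_mx; have := dotv_ge0 w.
have := sqr_coef_le_dotv (A *m intr_mx q - intr_mx p) i.
have -> : (A *m intr_mx q - intr_mx p) i 0 = \sum_j (q j 0)%:~R * A i j - (p i 0)%:~R.
  by rewrite !mxE; congr (_ - _); apply: eq_bigr => j _; rewrite !mxE mulrC.
lra.
Qed.

Lemma bigmax_abs_le_sqnorm (a b : nat) (u : 'cV[R]_a) (q : 'cV[int]_b) (c E : R) :
  0 < c -> 0 <= E ->
  dotv (col_mx u (c *: intr_mx q)) (col_mx u (c *: intr_mx q)) <= E ^+ 2 ->
  c * (\max_(j < b) `|q j ord0|%N)%:R <= E.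
Proof.
move=> c0 E0 hb; apply: (big_ind (fun x : nat => c * x%:R <= E)).
- by rewrite mulr0.
- by move=> x y; case: leqP.
move=> j _; rewrite natr_absz intr_norm -(ger0_norm (ltW c0)) -normrM.
apply: le_norm_of_sqr => //; apply: le_trans hb.
rewrite dotv_col_mx; have := dotv_ge0 u.
have := sqr_coef_le_dotv (c *: intr_mx q) j; rewrite !mxE; lra.
Qed.

Lemma sqnorm_approx_le (a b : nat) (A : 'M[R]_(a, b)) (sv : 'cV[int]_b) (c : R)
    (s : nat) (eps : R) :
  (forall j, (`|sv j ord0| <= s)%N) ->
  (forall i, dnint (\sum_(j < b) (sv j 0)%:~R * A i j) <= eps) ->
  exists p : 'cV[int]_a,
    dotv (col_mx (A *m intr_mx sv - intr_mx p) (c *: intr_mx sv))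
         (col_mx (A *m intr_mx sv - intr_mx p) (c *: intr_mx sv))
    <= a%:R * eps ^+ 2 + b%:R * (c ^+ 2 * s%:R ^+ 2).
Proof.
move=> sv_le dn_le; set x := fun i : 'I_a => \sum_(j < b) (sv j 0)%:~R * A i j.
exists (\col_i nint (x i)); rewrite dotv_col_mx; apply: lerD.
  apply: dotv_le_dim => i.
  have -> : (A *m intr_mx sv - intr_mx (\col_i nint (x i))) i 0 = x i - (nint (x i))%:~R.
    by rewrite !mxE; congr (_ - _); apply: eq_bigr => j _; rewrite !mxE mulrC.
  have dn0 : 0 <= dnint (x i) by rewrite -dist_nint.
  rewrite -(real_normK (num_real _)) dist_nint.
  by rewrite ler_pXn2r ?nnegrE ?dn_le ?(le_trans dn0 (dn_le i)).
apply: dotv_le_dim => j; rewrite !mxE exprMn ler_wpM2l ?sqr_ge0 //.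
rewrite -(real_normK (num_real _)) -intr_norm -natr_absz ler_pXn2r ?nnegrE //.
by rewrite ler_nat.
Qed.

End NearestInteger.

Section ILLLBasis.
Variables (R : realType) (m n : nat) (A : 'M[R]_(n, m)).

Local Notation c k := (ILLL_c R m n k).
Local Notation t := ((2 `^ ((m + n)%:R / m%:R))^-1 : R).

Definition ILLL_basis k : 'M[R]_(n + m) := block_mx 1%:M A 0 (c k)%:M.
Definition ILLL_scale_mx : 'M[R]_(n + m) := block_mx 1%:M 0 0 t%:M.

Lemma ILLL_c_gt0 k : 0 < c k.
Proof. by rewrite !powR_gt0. Qed.

Lemma ILLL_scaleE (B : 'M[R]_(n + m)) : ILLL_scale B = ILLL_scale_mx *m B.
Proof.
rewrite /ILLL_scale /ILLL_scale_mx -[in RHS](vsubmxK B) mul_block_col.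
by rewrite !mul1mx !mul0mx addr0 add0r mul_scalar_mx.
Qed.

Lemma ILLL_cS k : c k.+1 = t * c k.
Proof.
rewrite /ILLL_c -!powRrM mulrC -powRN -powRD; last by rewrite pnatr_eq0 implybT.
by congr (_ `^ _); rewrite -addn1 natrD; ring.
Qed.

Lemma ILLL_scale_basis k : ILLL_scale (ILLL_basis k) = ILLL_basis k.+1.
Proof.
rewrite ILLL_scaleE /ILLL_scale_mx /ILLL_basis mulmx_block.
rewrite !mul_scalar_mx !scale1r !mul0mx !scaler0 !addr0 !add0r.
by rewrite ILLL_cS scale_scalar_mx.
Qed.

Lemma det_ILLL_scale (B : 'M[R]_(n + m)) : \det (ILLL_scale B) = t ^+ m * \det B.
Proof. by rewrite ILLL_scaleE det_mulmx det_ublock det1 det_scalar mul1r. Qed.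

Lemma det_ILLL_basis k : \det (ILLL_basis k) = c k ^+ m.
Proof. by rewrite det_ublock det1 det_scalar mul1r. Qed.

Lemma ILLL_basis_mul k (p : 'cV[int]_n) (q : 'cV[int]_m) :
  ILLL_basis k *m intr_mx (col_mx (- p) q) =
  col_mx (A *m intr_mx q - intr_mx p) (c k *: intr_mx q).
Proof.
rewrite map_col_mx mul_block_col mul1mx mul0mx add0r mul_scalar_mx map_mxN.
by rewrite addrC.
Qed.

Lemma norm_det_le_mul_intmx (B : 'M[R]_(n + m)) (V : 'M[int]_(n + m)) :
  \det (B *m intr_mx V) != 0 -> `|\det B| <= `|\det (B *m intr_mx V)|.
Proof.
rewrite det_mulmx normrM det_map_mx -intr_norm mulf_eq0 negb_or intr_eq0.
move=> /andP [_ V0]; rewrite ler_peMr ?normr_ge0 //.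
by rewrite (ler_int R 1); lia.
Qed.

(* lattice bases of the same lattice differ by integer matrices, so the
   lattice of B_k stays inside the current one and the determinant can only
   shrink along the run *)
Lemma ILLL_run_invariant qmax Cur Red q : ILLL_run A qmax Cur Red q ->
  forall k, (1 <= k)%N -> (k%:Z <= ILLL_kmax m n qmax)%R ->
  exists Z : 'M[int]_(n + m),
    [/\ ILLL_basis k = Cur k *m intr_mx Z, \det (Cur k) != 0
      & `|\det (Cur k)| <= c k ^+ m].
Proof.
move=> [Cur1 run]; elim=> [//|k IH] _ hk.
have [->|k0] := eqVneq k 0%N.
  exists 1; rewrite Cur1 -/(ILLL_basis 1) map_mx1 mulmx1 det_ILLL_basis.
  have c0 := ILLL_c_gt0 1.
  split=> //; first by rewrite expf_neq0 // gt_eqF.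
  by rewrite ger0_norm // exprn_ge0 // ltW.
have k1 : (1 <= k)%N by rewrite lt0n.
have hk' : (k%:Z <= ILLL_kmax m n qmax)%R by apply: le_trans hk; rewrite lez_nat.
have [Z [eZ detC detC_le]] := IH k1 hk'.
have [[U [V [_ eV]]] _ _ ->] := run k k1 hk'.
have t0 : 0 < t by rewrite invr_gt0 powR_gt0.
have detR : \det (Red k) != 0.
  by move: detC; rewrite eV det_mulmx mulf_eq0 negb_or => /andP [].
exists (V *m Z); rewrite det_ILLL_scale; split.
- by rewrite -ILLL_scale_basis eZ eV map_mxM !ILLL_scaleE !mulmxA.
- by rewrite mulf_neq0 // expf_neq0 // gt_eqF.
rewrite normrM ILLL_cS exprMn ger0_norm; last by rewrite exprn_ge0 // ltW.
apply: ler_wpM2l; first by rewrite exprn_ge0 // ltW.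
apply: le_trans detC_le.
by rewrite eV norm_det_le_mul_intmx -?eV.
Qed.

Lemma ILLL_reduced_lattice qmax Cur Red q k : ILLL_run A qmax Cur Red q -> (1 <= k)%N -> (k%:Z <= ILLL_kmax m n qmax)%R ->
  exists Y : 'M[int]_(n + m),
    ILLL_basis k = Red k *m intr_mx Y /\ `|\det (Red k)| <= c k ^+ m.
Proof.
move=> run k1 hk; have [Z [eZ detC detC_le]] := ILLL_run_invariant run k1 hk.
have [[U [V [_ eV]]] _ _ _] := run.2 k k1 hk.
exists (V *m Z); split; first by rewrite eZ eV map_mxM mulmxA.
by apply: le_trans detC_le; rewrite eV norm_det_le_mul_intmx -?eV.
Qed.

End ILLLBasis.

Section ExponentArithmetic.
Variables (R : realType) (m n : nat).
Hypotheses (hm : (1 <= m)%N) (hn : (1 <= n)%N).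

Local Notation M := (m%:R : R).
Local Notation N := (n%:R : R).
Local Notation L2 := (ln (2 : R)).
Local Notation c k := (ILLL_c R m n k).

Lemma M_gt0 : 0 < M. Proof. by rewrite ltr0n. Qed.
Lemma N_gt0 : 0 < N. Proof. by rewrite ltr0n. Qed.
Lemma ln2_gt0 : 0 < L2. Proof. by apply: ln_gt0; lra. Qed.

Lemma ln_exprn (x : R) j : 0 < x -> ln (x ^+ j) = j%:R * ln x.
Proof. by move=> x0; rewrite lnXn // mulr_natl. Qed.

Lemma ln_ILLL_c k : ln (c k) = (M + N) / M * ((- ((M + N + 3) / 4) - k%:R + 1) * L2).
Proof. by rewrite /ILLL_c !ln_powR !natrD. Qed.

Lemma sum_ord_id d : ((\sum_(i < d) i)%N%:R : R) * 2 = d%:R * (d%:R - 1).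
Proof.
elim: d => [|d IH]; first by rewrite big_ord0 !mul0r.
by rewrite big_ord_recr /= natrD mulrDl IH -addn1 natrD; ring.
Qed.

(* c(k) is chosen so that 2^((n+m)(n+m-1)/2) c(k)^(2m) = 2^(-2k(n+m)) *)
Lemma ILLL_det_bound_sqnorm k (x : R) : 0 <= x ->
  x ^+ (n + m) <= 2 ^+ (\sum_(i < n + m) i) * (c k ^+ m) ^+ 2 ->
  x <= 2 `^ (- (2 * k%:R)).
Proof.
move=> x0 hx; have [->|x0'] := eqVneq x 0; first exact: powR_ge0.
have xp : 0 < x by rewrite lt_def x0' x0.
have cp := ILLL_c_gt0 R m n k.
rewrite -ler_ln ?posrE ?powR_gt0 //.
move: hx; rewrite -ler_ln ?posrE ?mulr_gt0 ?exprn_gt0 //.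
rewrite lnM ?posrE ?exprn_gt0 // !ln_exprn ?exprn_gt0 // ln_powR ln_ILLL_c !natrD.
have hsum := sum_ord_id (n + m); rewrite natrD in hsum.
have -> : ((\sum_(i < n + m) i)%N%:R : R) = (N + M) * (N + M - 1) / 2.
  by rewrite -hsum mulfK.
move=> hx; set L := (X in _ <= X) in hx.
have hM := M_gt0; have hN := N_gt0; have hL := ln2_gt0.
have eL : L = (N + M) * (- (2 * k%:R) * L2) by rewrite /L; field; rewrite gt_eqF.
by rewrite eL ler_pM2l ?addr_gt0 in hx.
Qed.

End ExponentArithmetic.

(* the real k at which the two blocks of the approximation vector (sA - p,
   c(k) s) balance, c(k) sqrt m s = sqrt n delta s^(-m/n) *)
Definition ILLL_k0 (R : realType) (m n : nat) (delta : R) (s : nat) : R :=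
  1 - (m%:R + n%:R + 3) / 4 + m%:R / (2 * (m%:R + n%:R)) *
    ln (m%:R / (n%:R * delta ^+ 2)) / ln 2 + m%:R / n%:R * ln (s%:R : R) / ln 2.

Definition ILLL_k (R : realType) (m n : nat) (delta : R) (s : nat) : nat :=
  `|Num.ceil (ILLL_k0 m n delta s)|%N.

Section Threshold.
Variables (R : realType) (m n : nat) (delta : R) (s : nat) (qmax : R).
Hypotheses (hm : (1 <= m)%N) (hn : (1 <= n)%N) (hd : 0 < delta) (hs : (0 < s)%N).
Hypothesis Hs : s%:R > 2 `^ ((m + n - 1)%:R * n%:R / (4 * m%:R))
         * (n%:R * delta ^+ 2 / m%:R) `^ (n%:R / (2 * (m + n)%:R)).
Hypothesis Hq : qmax >= 2 `^ (((m ^ 2 + m * (n - 1) + 4 * n)%N)%:R / (4 * m%:R))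
          * (m%:R / (n%:R * delta ^+ 2)) `^ (n%:R / (2 * (m + n)%:R)) * s%:R.

Local Notation M := (m%:R : R).
Local Notation N := (n%:R : R).
Local Notation L2 := (ln (2 : R)).
Local Notation ls := (ln (s%:R : R)).
Local Notation mu := (ln (m%:R / (n%:R * delta ^+ 2) : R)).
Local Notation K0 := (ILLL_k0 m n delta s).
Local Notation k := (ILLL_k m n delta s).
Local Notation c k := (ILLL_c R m n k).

Let hM := M_gt0 R hm.
Let hN := N_gt0 R hn.
Let hL := ln2_gt0 R.
Let hMN : 0 < M + N := addr_gt0 hM hN.
Local Ltac field_pos := field; rewrite ?(gt_eqF hM, gt_eqF hN, gt_eqF hL, gt_eqF hMN).

Lemma ratio_gt0 : 0 < M / (N * delta ^+ 2).
Proof. by rewrite divr_gt0 ?mulr_gt0 ?exprn_gt0. Qed.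

Lemma natr_quad : (((m ^ 2 + m * (n - 1) + 4 * n)%N)%:R : R)
  = M ^+ 2 + M * (N - 1) + 4 * N.
Proof. by rewrite !natrD !natrM natrB // addr0; ring. Qed.

Lemma ln_s_gt : ls > (M + N - 1) * N / (4 * M) * L2 - N / (2 * (M + N)) * mu.
Proof.
have p := ratio_gt0.
move: Hs; rewrite -[N * _ / M]invf_div -ltr_ln ?posrE ?ltr0n //; last first.
  by rewrite mulr_gt0 // powR_gt0 // invr_gt0.
rewrite lnM ?posrE ?powR_gt0 ?invr_gt0 // !ln_powR lnV ?posrE //.
rewrite natrB ?natrD; last by rewrite (leq_trans hm) ?leq_addr.
lra.
Qed.

Lemma ln_qmax_ge : ln qmax >= (M ^+ 2 + M * (N - 1) + 4 * N) / (4 * M) * L2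
                              + N / (2 * (M + N)) * mu + ls.
Proof.
have p := ratio_gt0; move: Hq.
set a1 := 2 `^ _; set a2 := _ `^ _.
have p1 : 0 < a1 by apply: powR_gt0.
have p2 : 0 < a2 by apply: powR_gt0.
have p3 : (0 : R) < s%:R by rewrite ltr0n.
rewrite -ler_ln ?posrE ?mulr_gt0 //; last first.
  by apply: lt_le_trans Hq; rewrite !mulr_gt0.
move=> hq; rewrite !lnM ?posrE ?mulr_gt0 // /a1 /a2 !ln_powR natr_quad natrD in hq.
lra.
Qed.

Lemma ILLL_k0_gt0 : 0 < K0.
Proof.
have h := ln_s_gt.
have -> : K0 = M / (N * L2) *
    (ls - ((M + N - 1) * N / (4 * M) * L2 - N / (2 * (M + N)) * mu)).
  by rewrite /ILLL_k0; field_pos.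
by rewrite mulr_gt0 ?divr_gt0 ?mulr_gt0 // subr_gt0.
Qed.

Lemma ceil_ILLL_k0_gt0 : 0 < Num.ceil K0.
Proof. by rewrite ceil_gt0 ILLL_k0_gt0. Qed.

Lemma ILLL_k_ge1 : (1 <= k)%N.
Proof. by rewrite /ILLL_k absz_gt0 gt_eqF // ceil_ILLL_k0_gt0. Qed.

Lemma ILLL_kE : (k%:R : R) = (Num.ceil K0)%:~R.
Proof. by rewrite natr_absz gtr0_norm // ceil_ILLL_k0_gt0. Qed.

Lemma ILLL_k_ge : K0 <= k%:R.
Proof. by rewrite ILLL_kE ceil_ge. Qed.

Lemma ILLL_k_lt : k%:R < K0 + 1.
Proof. by have := ceil_itv K0; rewrite ILLL_kE intrB => /andP [? _]; lra. Qed.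

Lemma ILLL_k_le_kmax : (k%:Z <= ILLL_kmax m n qmax)%R.
Proof.
rewrite /ILLL_kmax natrB ?natrD; last by rewrite (leq_trans hm) ?leq_addr.
set X := (- _ + _).
have hX : K0 + 1 <= X.
  have h := ln_qmax_ge.
  rewrite -subr_ge0; have -> : X - (K0 + 1) = M / (N * L2) * (ln qmax -
     ((M ^+ 2 + M * (N - 1) + 4 * N) / (4 * M) * L2 + N / (2 * (M + N)) * mu + ls)).
    by rewrite /X /ILLL_k0; field_pos.
  by rewrite mulr_ge0 ?subr_ge0 // ltW // divr_gt0 ?mulr_gt0.
rewrite -(ler_int R) (ILLL_kE : (k%:Z)%:~R = _) ler_int.
by apply: le_ceil; lra.
Qed.

Lemma ln_ratio : mu = ln M - ln N - 2 * ln delta.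
Proof.
rewrite ln_div ?posrE ?mulr_gt0 ?exprn_gt0 // lnM ?posrE ?exprn_gt0 //.
by rewrite ln_exprn //; lra.
Qed.

Lemma approx_block_le j : K0 <= j%:R ->
  c j ^+ 2 * (M * s%:R ^+ 2) <= N * (delta * s%:R `^ (- (M / N))) ^+ 2.
Proof.
move=> hj; have cp := ILLL_c_gt0 R m n j.
have sp : (0 : R) < s%:R by rewrite ltr0n.
rewrite -ler_ln ?posrE ?mulr_gt0 ?exprn_gt0 ?powR_gt0 //.
rewrite !lnM ?posrE ?mulr_gt0 ?exprn_gt0 ?powR_gt0 // [ln (s%:R `^ _)]ln_powR.
have e : ln N + 2 * (ln delta + - (M / N) * ls) - (2 * ln (c j) + (ln M + 2 * ls))
       = 2 * (M + N) / M * L2 * (j%:R - K0).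
  by rewrite ln_ILLL_c /ILLL_k0 ln_ratio; field_pos.
have : 0 <= 2 * (M + N) / M * L2 * (j%:R - K0).
  by rewrite mulr_ge0 ?subr_ge0 // ltW // !mulr_gt0 ?invr_gt0.
by rewrite -e; lra.
Qed.

Lemma pow2_le_ILLL_c j : j%:R < K0 + 1 ->
  2 `^ (- j%:R) <= c j *
    (2 `^ (((m ^ 2 + m * (n - 1) + 4 * n)%N)%:R / (4 * m%:R))
     * (m%:R / (n%:R * delta ^+ 2)) `^ (n%:R / (2 * (m + n)%:R)) * s%:R).
Proof.
move=> hj; have cp := ILLL_c_gt0 R m n j.
have sp : (0 : R) < s%:R by rewrite ltr0n.
have p := ratio_gt0.
rewrite -ler_ln ?posrE ?powR_gt0 ?mulr_gt0 ?powR_gt0 //.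
rewrite !lnM ?posrE ?mulr_gt0 ?powR_gt0 // ln_ILLL_c !ln_powR natr_quad natrD.
rewrite -subr_ge0; set f := (X in 0 <= X).
have -> : f = N / M * L2 * (K0 + 1 - j%:R).
  by rewrite /f /ILLL_k0; field_pos.
apply: mulr_ge0; last by rewrite subr_ge0; lra.
by rewrite ltW // !mulr_gt0 ?invr_gt0.
Qed.

End Threshold.

Lemma ILLL_target_sqr (R : realType) (m n : nat) (delta r : R) : (1 <= n)%N ->
  (2 `^ ((m + n)%:R / 2) * Num.sqrt n%:R * delta * r) ^+ 2 =
  2 ^+ (n + m).-1 * (2 * (n%:R * (delta * r) ^+ 2)).
Proof.
move=> hn; rewrite !exprMn sqr_sqrtr ?ler0n //.
rewrite -(@powR_mulrn R (2 `^ ((m + n)%:R / 2)) 2) ?powR_ge0 // -powRrM.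
rewrite mulfVK ?pnatr_eq0 // powR_mulrn // addnC.
by rewrite mulrA -exprSr prednK ?addn_gt0 ?hn ?orbT // !mulrA.
Qed.

Lemma col_mx_scale_intr_neq0 (R : realType) (a b : nat) (u : 'cV[R]_a)
    (q : 'cV[int]_b) (c : R) j :
  c != 0 -> q j ord0 != 0 -> col_mx u (c *: intr_mx q) != 0.
Proof.
move=> c0 qj; apply/eqP => /(congr1 (fun v : 'cV[R]_(a + b) => v (rshift a j) ord0)).
by rewrite col_mxEd !mxE => /eqP; rewrite mulf_eq0 intr_eq0 (negbTE c0) (negbTE qj).
Qed.

Lemma bigmax_absz_gt0 (b : nat) (f : 'I_b -> int) :
  (0 < \max_(j < b) `|f j|)%N -> exists j, f j != 0.
Proof.
move=> f0; apply/existsP; apply: contraLR f0; rewrite negb_exists => /forallP f0.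
by rewrite -leqNgt leqn0 big1 // => j _; move/negPn/eqP: (f0 j) => ->.
Qed.

Section ILLLFirstVector.
Variables (R : realType) (m n : nat) (A : 'M[R]_(n, m)) (qmax : R).
Variables (Cur Red : nat -> 'M[R]_(n + m)) (q : nat -> 'cV[int]_m) (k : nat).
Hypotheses (run : ILLL_run A qmax Cur Red q).
Hypotheses (k1 : (1 <= k)%N) (hk : (k%:Z <= ILLL_kmax m n qmax)%R).

Local Notation b := (bvec (Red k) 0).

Lemma ILLL_first_sqnorm : (1 <= m)%N -> (1 <= n)%N ->
  dotv b b <= (2 `^ (- k%:R)) ^+ 2.
Proof.
move=> hm hn; have [Y [_ detR]] := ILLL_reduced_lattice run k1 hk.
have [_ redR _ _] := run.2 k k1 hk.
have -> : (2 `^ (- k%:R) : R) ^+ 2 = 2 `^ (- (2 * k%:R)).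
  by rewrite -powR_mulrn ?powR_ge0 // -powRrM; congr (_ `^ _); ring.
apply: (ILLL_det_bound_sqnorm hm hn (dotv_ge0 b)).
apply: le_trans (reduced_bvec0_le_det redR) _.
apply: ler_wpM2l; first exact: exprn_ge0.
rewrite -(real_normK (num_real (\det _))) ler_pXn2r ?nnegrE ?normr_ge0 //.
exact: le_trans (normr_ge0 _) detR.
Qed.

Lemma ILLL_first_le_lattice (w : 'cV[int]_(n + m)) :
  ILLL_basis A k *m intr_mx w != 0 ->
  dotv b b <= 2 ^+ (n + m).-1 *
    dotv (ILLL_basis A k *m intr_mx w) (ILLL_basis A k *m intr_mx w).
Proof.
have [Y [-> _]] := ILLL_reduced_lattice run k1 hk.
have [_ redR _ _] := run.2 k k1 hk.
rewrite -mulmxA -map_mxM; exact: reduced_bvec0_le_lattice.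
Qed.

Lemma ILLL_first_le_approx (sv : 'cV[int]_m) (s : nat) (eps : R) j0 :
  sv j0 ord0 != 0 -> (forall j, (`|sv j ord0| <= s)%N) ->
  (forall i, dnint (\sum_(j < m) (sv j ord0)%:~R * A i j) <= eps) ->
  dotv b b <= 2 ^+ (n + m).-1 *
    (n%:R * eps ^+ 2 + m%:R * (ILLL_c R m n k ^+ 2 * s%:R ^+ 2)).
Proof.
move=> svj0 sv_le sv_dnint.
have [p svp] := sqnorm_approx_le (ILLL_c R m n k) sv_le sv_dnint.
have c0 := lt0r_neq0 (ILLL_c_gt0 R m n k).
have v0 : ILLL_basis A k *m intr_mx (col_mx (- p) sv) != 0.
  by rewrite ILLL_basis_mul (col_mx_scale_intr_neq0 _ c0 svj0).
apply: le_trans (ILLL_first_le_lattice v0) _.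
by rewrite ILLL_basis_mul ler_wpM2l ?exprn_ge0.
Qed.

End ILLLFirstVector.

Unset Implicit Arguments. Set Strict Implicit.

Theorem lemma4 (R : realType) (m n : nat) (A : 'M[R]_(n, m)) (delta : R)
    (s : nat) (sv : 'I_m -> int) (qmax : R)
    (Cur Red : nat -> 'M[R]_(n + m)) (q : nat -> 'cV[int]_m) :
  (1 <= m)%N -> (1 <= n)%N ->
  0 < delta < 1 -> (1 < s)%N ->
  s = (\max_(j < m) `|sv j|%N)%N ->
  s%:R > 2 `^ ((m + n - 1)%:R * n%:R / (4 * m%:R))
         * (n%:R * delta ^+ 2 / m%:R) `^ (n%:R / (2 * (m + n)%:R)) ->
  \big[Num.max/0]_(i < n) dnint (\sum_(j < m) (sv j)%:~R * A i j)
     <= delta * s%:R `^ (- (m%:R / n%:R)) ->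
  1 < qmax ->
  qmax >= 2 `^ (((m ^ 2 + m * (n - 1) + 4 * n)%N)%:R / (4 * m%:R))
          * (m%:R / (n%:R * delta ^+ 2)) `^ (n%:R / (2 * (m + n)%:R)) * s%:R ->
  ILLL_run A qmax Cur Red q ->
  exists k : nat, [/\ (1 <= k)%N, k%:Z <= ILLL_kmax m n qmax,
    (\max_(j < m) `|q k j ord0|%N)%:R
      <= 2 `^ (((m ^ 2 + m * (n - 1) + 4 * n)%N)%:R / (4 * m%:R))
         * (m%:R / (n%:R * delta ^+ 2)) `^ (n%:R / (2 * (m + n)%:R)) * s%:R
    & \big[Num.max/0]_(i < n) dnint (\sum_(j < m) (q k j ord0)%:~R * A i j)
      <= 2 `^ ((m + n)%:R / 2) * Num.sqrt n%:R * delta * s%:R `^ (- (m%:R / n%:R))].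
Proof.
move=> hm hn /andP [delta0 _] hs es Hs Hmax _ Hq run.
have s0 := ltnW hs.
have k1 := ILLL_k_ge1 hm hn delta0 s0 Hs.
have hk := ILLL_k_le_kmax hm hn delta0 s0 Hs Hq.
set k := ILLL_k m n delta s in k1 hk *.
have c0 := ILLL_c_gt0 R m n k.
have [_ _ [p bE] _] := run.2 k k1 hk.
exists k; split => //.
  rewrite -(ler_pM2l c0).
  apply: le_trans (pow2_le_ILLL_c hm hn delta0 s0 (ILLL_k_lt hm hn delta0 s0 Hs)).
  move: (ILLL_first_sqnorm run k1 hk hm hn); rewrite bE.
  exact: bigmax_abs_le_sqnorm c0 (powR_ge0 _ _).
have [j0 svj0] : exists j0, sv j0 != 0 by apply: bigmax_absz_gt0; rewrite -es ltnW.
set svc : 'cV[int]_m := \col_j sv j.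
have svc0 : svc j0 ord0 != 0 by rewrite mxE.
have svc_le j : (`|svc j ord0| <= s)%N by rewrite mxE es (bigD1 j) //= leq_max leqnn.
have svc_dnint i : dnint (\sum_j (svc j ord0)%:~R * A i j)
                   <= delta * s%:R `^ (- (m%:R / n%:R)).
  apply: le_trans Hmax; apply: le_trans (le_bigmax _ _ i).
  by under eq_bigr do rewrite mxE.
have := ILLL_first_le_approx run k1 hk svc0 svc_le svc_dnint; rewrite bE => bb.
apply: (bigmax_dnint_le_sqnorm _ (le_trans bb _)).
  by rewrite !mulr_ge0 ?powR_ge0 ?sqrtr_ge0 ?(ltW delta0).
rewrite ILLL_target_sqr // ler_wpM2l ?exprn_ge0 //.
have := approx_block_le hm hn delta0 s0 (ILLL_k_ge hm hn delta0 s0 Hs).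
lra.
Qed.
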